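(* Let $n\ge 1$. The cyclic group $\mathbb{Z}_n$ is code-perfect if and only if $n$ is odd, or $n=2d$ where $d=2$ or $d$ is odd.
   Context: For a subgroup $H$ of a finite abelian group $A$ (written additively with identity $0$), the subgroup sum graph $\Gamma_{A,H}$ is the simple undirected graph with vertex set $A$ in which distinct vertices $x,y$ are adjacent if and only if $x+y\in H\setminus\{0\}$. A perfect code in a graph is a set $C$ of vertices that is independent and such that every vertex not in $C$ is adjacent to exactly one vertex of $C$. A finite group $G$ is code-perfect if $\Gamma_{G,H}$ admits a perfect code for every normal subgroup $H$ of $G$. *)

From HB Require Import structures.
From mathcomp Require Import all_boot all_order all_algebra.
Set Implicit Arguments. Unset Strict Implicit. Unset Printing Implicit Defensive.
Import GRing.Theory.
Local Open Scope ring_scope.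

(* A finite abelian group, written additively, is a finZmodType. *)
Section SubgroupSumGraph.
Variable A : finZmodType.

Definition is_subgroup (H : {set A}) : bool :=
  (0 \in H) && [forall x in H, forall y in H, x - y \in H].

Definition ssg_adj (H : {set A}) (x y : A) : bool :=
  [&& x != y, x + y \in H & x + y != 0].

Definition perfect_code (H : {set A}) (C : {set A}) : Prop :=
  (forall x y, x \in C -> y \in C -> ~~ ssg_adj H x y) /\
  (forall x, x \notin C -> #|[set c in C | ssg_adj H x c]| = 1%N).

(* A is code-perfect: Gamma_{A,H} has a perfect code for every (normal)
   subgroup H; A is abelian so every subgroup is normal. *)
Definition code_perfect : Prop :=
  forall H : {set A}, is_subgroup H -> exists C : {set A}, perfect_code H C.
End SubgroupSumGraph.

From mathcomp Require Import all_boot all_order all_algebra.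
From mathcomp Require Import zify.
Set Implicit Arguments. Unset Strict Implicit. Unset Printing Implicit Defensive.
Import GRing.Theory.
Local Open Scope ring_scope.

(* Sufficiency: the sets (x + H) \u (-x + H) partition A and every edge of the
   subgroup sum graph joins two vertices of the same block, so perfect codes
   of the blocks glue to a perfect code.  A block with 2a \notin H, or equal
   to {a, -a}, has the perfect code {a, -a}; a block a + H containing an
   element z with 2z = 0 has the perfect code {z}.  In Z_n with n odd or
   n = 2d, d odd, take z = d a; in Z_4 check the cases.
   Necessity: otherwise n = 4k with k > 1; let H = 2 Z_n.  A perfect code C
   lies inside H: for x \in C \ H, if -x \notin C then the neighbour of -x in
   C is adjacent to x, and if -x \in C then x + t, for t \in H \ {0, -2x},
   has the two neighbours x, -x in C.  But then the neighbour c \in C of the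
   odd vertex 1 gives 1 = (1 + c) - c \in H. *)

Section Subgroup.
Variables (A : finZmodType) (H : {set A}).
Hypothesis subH : is_subgroup H.

Lemma subgroup0 : 0 \in H.
Proof. by case/andP: subH. Qed.

Lemma subgroupB x y : x \in H -> y \in H -> x - y \in H.
Proof.
case/andP: subH => _ /forallP closedB xH yH.
by move/(_ x): closedB; rewrite xH => /forallP/(_ y); rewrite yH.
Qed.

Lemma subgroupN x : (- x \in H) = (x \in H).
Proof.
have closedN y : y \in H -> - y \in H.
  by rewrite -sub0r; apply: subgroupB subgroup0.
by apply/idP/idP => [/closedN|/closedN//]; rewrite opprK.
Qed.

Lemma subgroupD x y : x \in H -> y \in H -> x + y \in H.
Proof. by move=> xH yH; rewrite -[y]opprK subgroupB ?subgroupN. Qed.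

Lemma subgroupDr u v : u \in H -> (v + u \in H) = (v \in H).
Proof.
move=> uH; apply/idP/idP => [vuH|vH]; last exact: subgroupD.
by rewrite -(addrK u v) subgroupB.
Qed.

Lemma subgroupBr u v : u \in H -> (v - u \in H) = (v \in H).
Proof. by rewrite -subgroupN; apply: subgroupDr. Qed.

Lemma subgroupMn x k : x \in H -> x *+ k \in H.
Proof.
by move=> xH; elim: k => [|k IHk]; rewrite ?mulr0n ?subgroup0 // mulrS subgroupD.
Qed.

Definition pm_coset (x : A) := [set y | (y - x \in H) || (y + x \in H)].

Lemma pm_coset_refl x : x \in pm_coset x.
Proof. by rewrite inE subrr subgroup0. Qed.

Lemma pm_coset_eq x y : y \in pm_coset x -> pm_coset y = pm_coset x.
Proof.
rewrite inE => /orP[] yxH; apply/setP => z; rewrite !inE.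
all: rewrite -(subgroupDr (z - y) yxH) -(subgroupBr (z + y) yxH) subrKA addrKA.
  by rewrite opprK.
by rewrite orbC.
Qed.

Lemma pm_cosetE a x : a + a \in H -> (x \in pm_coset a) = (x - a \in H).
Proof.
by move=> aaH; rewrite inE -(subrKA a x a) (subgroupDr _ aaH) orbb.
Qed.

Lemma ssg_adj_pm_coset x y : ssg_adj H x y -> y \in pm_coset x.
Proof. by case/and3P=> _ xyH _; rewrite inE [y + x]addrC xyH orbT. Qed.

(* Only the part of D inside S matters, since neighbours stay in a block. *)
Definition perfect_code_on (S D : {set A}) :=
  {in D &, forall x y, ~~ ssg_adj H x y} /\
  {in S, forall x, x \notin D -> #|[set c in D | ssg_adj H x c]| = 1%N}.

Lemma perfect_code_of_pm_cosets :
  (forall a, exists D, perfect_code_on (pm_coset a) D) ->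
  exists C, perfect_code H C.
Proof.
move=> local.
have : forall S, exists D, forall a, S = pm_coset a -> perfect_code_on S D.
  move=> S.
  have [/existsP[a /eqP->]|/existsP noa] := boolP [exists a, S == pm_coset a].
    by have [D codeD] := local a; exists D.
  by exists set0 => a eqS; case: noa; exists a; rewrite eqS.
case/fin_all_exists=> f codef.
exists [set x | x \in f (pm_coset x)]; split=> [x y|x].
  rewrite !inE => xC yC; apply/negP => adjxy.
  have [indep _] := codef _ x erefl.
  move: yC; rewrite (pm_coset_eq (ssg_adj_pm_coset adjxy)) => yC.
  by move/negP: (indep x y xC yC).
rewrite inE => xC; have [_ count] := codef _ x erefl.
rewrite -(count x (pm_coset_refl x) xC); apply: eq_card => c; rewrite !inE.
case adjxc: (ssg_adj H x c); rewrite ?andbF ?andbT //.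
by rewrite (pm_coset_eq (ssg_adj_pm_coset adjxc)).
Qed.

Lemma opp_pair_indep a : {in [set a; - a] &, forall x y, ~~ ssg_adj H x y}.
Proof.
move=> x y; rewrite !inE => /orP[]/eqP-> /orP[]/eqP->;
  by rewrite /ssg_adj ?eqxx ?subrr ?addrN ?addNr ?eqxx ?andbF.
Qed.

Lemma perfect_code_on_involution a z : a + a \in H -> z + z = 0 ->
  z - a \in H -> perfect_code_on (pm_coset a) [set z].
Proof.
move=> aaH zz zaH; split=> [x y|x].
  by rewrite !inE => /eqP-> /eqP->; rewrite /ssg_adj eqxx.
rewrite pm_cosetE // => xaH; rewrite inE => xz.
apply/eqP/cards1P; exists z; apply/setP => c; rewrite !inE.
case: eqP => [->|] //=.
have zN : - z = z by apply/eqP; rewrite eq_sym -addr_eq0 zz.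
rewrite /ssg_adj xz addr_eq0 zN xz andbT -{1}zN.
have <- : (x - a) - (z - a) = x - z by rewrite opprB addrA subrK.
exact: subgroupB.
Qed.

Lemma perfect_code_on_small_coset a : a + a \in H ->
  (forall x, x - a \in H -> x = a \/ x = - a) ->
  perfect_code_on (pm_coset a) [set a; - a].
Proof.
move=> aaH small; split; first exact: opp_pair_indep.
move=> x; rewrite pm_cosetE // !inE => /small[]->; by rewrite eqxx ?orbT.
Qed.

Lemma perfect_code_on_opp_pair a : a + a \notin H ->
  perfect_code_on (pm_coset a) [set a; - a].
Proof.
move=> aaH; split; first exact: opp_pair_indep.
move=> x; rewrite !inE negb_or => xaH /andP[xa xNa].
have aa_x : x + a = (a + a) + (x - a) by rewrite [RHS]addrC subrKA.
have [x_aH|x_aH] := orP xaH; apply/eqP/cards1P.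
- exists (- a); apply/setP => c; rewrite !inE.
  have [->|_] := eqVneq c (- a).
    by rewrite orbT /ssg_adj xNa x_aH subr_eq0 xa.
  have [->|//] := eqVneq c a.
  by rewrite /ssg_adj aa_x subgroupDr // (negPf aaH) andbF.
- exists a; apply/setP => c; rewrite !inE.
  have [->|_] := eqVneq c a; first by rewrite /ssg_adj xa x_aH addr_eq0 xNa.
  have [->|//] := eqVneq c (- a).
  rewrite /ssg_adj -(subgroupBr _ x_aH) opprD addrACA subrr add0r.
  by rewrite -opprD subgroupN (negPf aaH) !andbF.
Qed.

Definition involution_condition := forall a, a + a \in H ->
  (exists z, z + z = 0 /\ z - a \in H) \/
  (forall x, x - a \in H -> x = a \/ x = - a).

Lemma perfect_code_of_condition :
  involution_condition -> exists C, perfect_code H C.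
Proof.
move=> cond; apply: perfect_code_of_pm_cosets => a.
have [aaH|aaH] := boolP (a + a \in H); last first.
  by exists [set a; - a]; apply: perfect_code_on_opp_pair.
have [[z [zz zaH]]|small] := cond a aaH.
  by exists [set z]; apply: perfect_code_on_involution.
by exists [set a; - a]; apply: perfect_code_on_small_coset.
Qed.

(* z = d a satisfies 2z = 0, and z - a = (d - 1) a \in H as d - 1 is even. *)
Lemma involution_condition_exponent d :
  odd d -> (forall a : A, a *+ (2 * d) = 0) -> involution_condition.
Proof.
move=> odd_d expA a aaH; left; exists (a *+ d); split.
  by rewrite -mulrnDr addnn -mul2n.
have -> : (d = (d./2).*2.+1)%N by rewrite -[LHS]odd_double_half odd_d.
by rewrite mulrSr addrK -mul2n mulrnA mulr2n subgroupMn.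
Qed.

End Subgroup.

Lemma Zp_mulrn_order m (a : 'I_m.+1) : a *+ m.+1 = 0.
Proof. by rewrite Zp_mulrn; apply: val_inj; rewrite /= modnMl. Qed.

Lemma Z4_coset_opp (a x : 'I_4) : a + a != 0 -> x != a -> x != - a ->
  (x - a == - a) || (x - a == a).
Proof. by move: a x; do 2 case=> [[|[|[|[|//]]]] ?]. Qed.

Lemma involution_condition_Z4 (H : {set 'I_4}) :
  is_subgroup H -> involution_condition H.
Proof.
move=> subH a aaH; have [aa0|aa_neq0] := eqVneq (a + a) 0.
  by left; exists a; rewrite subrr subgroup0.
have [small|] := boolP [forall x, (x - a \in H) ==> (x == a) || (x == - a)].
  by right=> x xaH; move/forallP/(_ x): small; rewrite xaH => /orP[]/eqP; auto.
rewrite negb_forall => /existsP[x]; rewrite negb_imply negb_or.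
case/and3P=> xaH xa xNa; left; exists 0; rewrite add0r sub0r; split=> //.
case/orP: (Z4_coset_opp aa_neq0 xa xNa) => /eqP xa_eq.
  by rewrite -xa_eq.
by rewrite -xa_eq subgroupN.
Qed.

Lemma involution_condition_cyclic m (H : {set 'I_m.+1}) : is_subgroup H ->
  (odd m.+1 \/ exists d, m.+1 = (2 * d)%N /\ (d = 2%N \/ odd d)) ->
  involution_condition H.
Proof.
move=> subH [odd_n|[d [n2d [d2|odd_d]]]].
- apply: (involution_condition_exponent subH odd_n) => a.
  by rewrite mulnC mulrnA Zp_mulrn_order mul0rn.
- have m3 : m = 3%N by lia.
  by move: H subH; rewrite m3; apply: involution_condition_Z4.
- apply: (involution_condition_exponent subH odd_d) => a.
  by rewrite -n2d Zp_mulrn_order.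
Qed.

Lemma perfect_code_neighbour (A : finZmodType) (H C : {set A}) x :
  perfect_code H C -> x \notin C -> exists2 c, c \in C & ssg_adj H x c.
Proof.
case=> _ count /count/eqP/cards1P[c nbrs].
by have := set11 c; rewrite -nbrs inE => /andP[]; exists c.
Qed.

Section Doubles.
Variable A : finZmodType.

Definition doubles := [set x + x | x : A].

Lemma double_in_doubles x : x + x \in doubles.
Proof. by apply/imsetP; exists x. Qed.

Lemma doubles_subgroup : is_subgroup doubles.
Proof.
apply/andP; split; first by rewrite -[0]addr0 double_in_doubles.
apply/forallP => x; apply/implyP => /imsetP[u _ ->].
apply/forallP => y; apply/implyP => /imsetP[v _ ->].
by rewrite opprD addrACA double_in_doubles.
Qed.

Hypothesis involutions_doubles : forall z : A, z + z = 0 -> z \in doubles.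
Variable w : A.
Hypotheses (w_notin : w \notin doubles) (ww_neq0 : w + w != 0).
Hypothesis wwww_neq0 : w + w + (w + w) != 0.

Section Code.
Variable C : {set A}.
Hypothesis codeC : perfect_code doubles C.

Lemma code_opp_mem x : x \in C -> - x \in C.
Proof.
move=> xC; apply/negPn/negP => NxC.
have [c cC adjNxc] := perfect_code_neighbour codeC NxC.
case/and3P: adjNxc => _ Nxc_dbl Nxc_neq0.
have [indep _] := codeC; move/negP: (indep x c xC cC); apply.
have xc_dbl : x + c \in doubles.
  have -> : x + c = - x + c + (x + x) by rewrite addrACA addNr add0r addrC.
  by rewrite subgroupDr ?doubles_subgroup ?double_in_doubles.
rewrite /ssg_adj xc_dbl /=.
apply/andP; split; first by apply: (contraNneq _ Nxc_neq0) => <-; rewrite addNr.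
by rewrite addr_eq0; apply: (contraNneq _ NxC) => ->; rewrite opprK.
Qed.

Lemma code_opp_notin x : x \notin doubles -> x \in C -> - x \notin C.
Proof.
move=> x_notin xC; apply/negP => NxC; have [indep count] := codeC.
have x_neq_Nx : x != - x.
  apply: contraNneq x_notin => x_Nx.
  by apply: involutions_doubles; rewrite {1}x_Nx addNr.
have [t [t_dbl t_neq0 xxt_neq0]] :
    exists t, [/\ t \in doubles, t != 0 & x + x + t != 0].
  have [xxww|] := eqVneq (x + x + (w + w)) 0.
    exists (w + w + (w + w)).
    by rewrite double_in_doubles wwww_neq0 addrA xxww add0r.
  by exists (w + w); rewrite double_in_doubles.
have xtx : x + t - x = t by rewrite addrAC subrr add0r.
have adj_xt : {in [set x; - x], forall y, ssg_adj doubles (x + t) y}.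
  move=> y; rewrite !inE => /orP[]/eqP->; rewrite /ssg_adj.
    rewrite -subr_eq0 xtx t_neq0 addrAC xxt_neq0 andbT.
    by rewrite subgroupD ?doubles_subgroup ?double_in_doubles.
  by rewrite xtx t_dbl t_neq0 -addr_eq0 addrAC xxt_neq0.
have xt_notin : x + t \notin C.
  apply: contraTN (adj_xt x (set21 _ _)) => xtC.
  exact: indep.
have nbrs : [set x; - x] \subset [set c in C | ssg_adj doubles (x + t) c].
  apply/subsetP => y yx; rewrite inE adj_xt // andbT.
  by move: yx; rewrite !inE => /orP[]/eqP->.
by move: (subset_leq_card nbrs); rewrite count // cards2 x_neq_Nx.
Qed.

Lemma code_subset_doubles : C \subset doubles.
Proof.
apply/subsetP => x xC; apply/negPn/negP => x_notin.
by move: (code_opp_notin x_notin xC); rewrite code_opp_mem.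
Qed.
End Code.

Lemma doubles_no_perfect_code C : ~ perfect_code doubles C.
Proof.
move=> codeC; have /subsetP C_dbl := code_subset_doubles codeC.
have w_notC : w \notin C by apply: contraNN w_notin; apply: C_dbl.
have [c cC /and3P[_ wc_dbl _]] := perfect_code_neighbour codeC w_notC.
move/negP: w_notin; apply.
by rewrite -(subgroupDr doubles_subgroup w (C_dbl c cC)).
Qed.
End Doubles.

Section CyclicMultipleOf8.
Variables m k : nat.
Hypotheses (n4k : m.+1 = (4 * k)%N) (k_gt1 : (1 < k)%N).

Let w : 'I_m.+1 := inord 1.

Lemma Zp_inord1_val : w = 1%N :> nat.
Proof. by rewrite inordK //; lia. Qed.

Lemma Zp_inord1_notin_doubles : w \notin doubles 'I_m.+1.
Proof.
have even_n : odd m.+1 = false by rewrite n4k oddM.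
apply/imsetP => -[x _ /(congr1 val)] /=; rewrite Zp_inord1_val => ww.
by move: (congr1 odd ww); rewrite odd_mod // addnn odd_double.
Qed.

Lemma Zp_inord1_double_neq0 : w + w != 0.
Proof.
by apply/eqP => /(congr1 val) /=; rewrite Zp_inord1_val modn_small //; lia.
Qed.

Lemma Zp_inord1_quadruple_neq0 : w + w + (w + w) != 0.
Proof.
apply/eqP => /(congr1 val) /=; rewrite Zp_inord1_val.
by rewrite !(modn_small (_ : 1 + 1 < m.+1)%N) ?modn_small //; lia.
Qed.

Lemma Zp_involution_doubles (z : 'I_m.+1) : z + z = 0 -> z \in doubles 'I_m.+1.
Proof.
move=> zz; apply/imsetP.
have /dvdnP[q zzq] : (m.+1 %| z + z)%N by move/(congr1 val): zz => /= /eqP.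
have [z0|z2k] : z = 0%N :> nat \/ z = (2 * k)%N :> nat.
  by move: zzq (ltn_ord z); case: q => [|[|q]] /=; nia.
  by exists z => //; rewrite zz; apply: val_inj.
exists (inord k) => //; apply: val_inj; rewrite /= inordK; last lia.
by rewrite modn_small; lia.
Qed.

Lemma Zp_not_code_perfect : ~ code_perfect 'I_m.+1.
Proof.
move=> cp; have [C codeC] := cp _ (doubles_subgroup 'I_m.+1).
exact: (doubles_no_perfect_code Zp_involution_doubles Zp_inord1_notin_doubles
  Zp_inord1_double_neq0 Zp_inord1_quadruple_neq0 codeC).
Qed.
End CyclicMultipleOf8.

Lemma cyclic_order_cases n : (0 < n)%N ->
  (odd n \/ exists d, n = (2 * d)%N /\ (d = 2%N \/ odd d)) \/
  exists2 k, n = (4 * k)%N & (1 < k)%N.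
Proof.
have halfE p : ~~ odd p -> p = (2 * p./2)%N.
  by move=> even_p; rewrite -[LHS]odd_double_half (negPf even_p) mul2n.
move=> n_gt0; have [odd_n|/halfE n2d] := boolP (odd n); first by left; left.
have [odd_d|/halfE d2k] := boolP (odd n./2).
  by left; right; exists n./2; auto.
have [d2|d_neq2] := eqVneq n./2 2%N; first by left; right; exists n./2; auto.
by right; exists n./2./2; lia.
Qed.

Theorem corollary4p6 (m : nat) :
  code_perfect 'I_m.+1 <->
  (odd m.+1 \/ exists d : nat, m.+1 = (2 * d)%N /\ (d = 2%N \/ odd d)).
Proof.
split=> [cp | shape H subH]; last first.
  exact: perfect_code_of_condition (involution_condition_cyclic subH shape).
have [//|[k n4k k_gt1]] := cyclic_order_cases (ltn0Sn m).
by case: (Zp_not_code_perfect n4k k_gt1).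
Qed.
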